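(* Let $(H,\mu_H,\Delta_H,\alpha_H)$ be a Hom-bialgebra and $(A,\mu_A,\alpha_A)$ a left $H$-module Hom-algebra with action $h\otimes a\mapsto h\cdot a$, with $\alpha_H,\alpha_A$ bijective. Assume moreover that $(A,\alpha_A)$ is a left $H$-comodule with structure $a\mapsto a_{(-1)}\otimes a_{(0)}$ such that $(A,\mu_A,\alpha_A)$ is a left $H$-comodule Hom-algebra and $(A,\alpha_A)$ is a left-left Yetter-Drinfeld module over $H$. Then the Hom-smash product $A\# H$ is an $H$-bicomodule Hom-algebra via $\rho_{A\# H}(a\# h)=(\alpha_A(a)\# h_1)\otimes h_2$ and $\lambda_{A\# H}:A\# H\to H\otimes(A\# H)$, $\lambda_{A\# H}(a\# h)=a_{(-1)}h_1\otimes(a_{(0)}\# h_2)$.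
   Context: Over a field $k$, no (co)units assumed; $\Delta(h)=h_1\otimes h_2$. Hom-associative algebra $(A,\mu,\alpha)$: $\alpha(aa')=\alpha(a)\alpha(a')$, $\alpha(a)(a'a'')=(aa')\alpha(a'')$; morphisms commute with structure maps and multiplications; tensor products of Hom-associative algebras are componentwise. Hom-bialgebra $(H,\mu,\Delta,\alpha)$: $(H,\mu,\alpha)$ Hom-associative, $\Delta(h_1)\otimes\alpha(h_2)=\alpha(h_1)\otimes\Delta(h_2)$, $\Delta(hh')=h_1h'_1\otimes h_2h'_2$, $\Delta(\alpha(h))=\alpha(h_1)\otimes\alpha(h_2)$. Left $H$-module Hom-algebra: Hom-associative $(A,\mu_A,\alpha_A)$ with action satisfying $\alpha_A(h\cdot a)=\alpha_H(h)\cdot\alpha_A(a)$, $\alpha_H(h)\cdot(h'\cdot a)=(hh')\cdot\alpha_A(a)$, $\alpha_H^2(h)\cdot(aa')=(h_1\cdot a)(h_2\cdot a')$. Hom-smash product $A\# H$: $A\otimes H$, structure map $\alpha_A\otimes\alpha_H$, product $(a\# h)(a'\# h')=a(\alpha_H^{-2}(h_1)\cdot\alpha_A^{-1}(a'))\#\alpha_H^{-1}(h_2)h'$. A left $H$-comodule structure on $(M,\alpha_M)$ is $\lambda:M\to H\otimes M$ with $(\alpha_H\otimes\alpha_M)\circ\lambda=\lambda\circ\alpha_M$ and $(\Delta_H\otimes\alpha_M)\circ\lambda=(\alpha_H\otimes\lambda)\circ\lambda$; a right one is $\rho:M\to M\otimes H$ with $(\alpha_M\otimes\alpha_H)\circ\rho=\rho\circ\alpha_M$,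 $(\alpha_M\otimes\Delta_H)\circ\rho=(\rho\otimes\alpha_H)\circ\rho$; $M$ is an $H$-bicomodule if it has both and $(\lambda\otimes\alpha_H)\circ\rho=(\alpha_H\otimes\rho)\circ\lambda$. A left (right) $H$-comodule Hom-algebra is a Hom-associative algebra with a left (right) comodule structure that is a morphism of Hom-associative algebras into $H\otimes D$ ($D\otimes H$); an $H$-bicomodule Hom-algebra is both a left and right $H$-comodule Hom-algebra whose structures form an $H$-bicomodule. A left-left Yetter-Drinfeld module over $H$ is $(M,\alpha_M)$ that is a left $H$-module (action with $\alpha_M(h\cdot m)=\alpha_H(h)\cdot\alpha_M(m)$, $\alpha_H(h)\cdot(h'\cdot m)=(hh')\cdot\alpha_M(m)$) and a left $H$-comodule $m\mapsto m_{(-1)}\otimes m_{(0)}$ such that $(h_1\cdot m)_{(-1)}\alpha_H^2(h_2)\otimes(h_1\cdot m)_{(0)}=\alpha_H^2(h_1)\alpha_H(m_{(-1)})\otimes\alpha_H(h_2)\cdot m_{(0)}$. *)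

From HB Require Import structures.
From mathcomp Require Import all_boot all_order all_algebra.
Set Implicit Arguments. Unset Strict Implicit. Unset Printing Implicit Defensive.
Import GRing.Theory.
Local Open Scope ring_scope.

(* An element of U (x) V is represented by a finite list of pure tensors     *)
(* [:: (u1,v1); ...] standing for u1 (x) v1 + ... ; sums are concatenation.  *)
(* Two representatives are equal in U (x) V iff every bilinear form          *)
(* U x V -> K takes the same value on them (over a field, bilinear forms    *)
(* separate the points of U (x) V).  Similarly for 3- and 4-fold tensors,    *)
(* represented by lists of tuples ((u,v),w) resp. (((u,v),w),x).            *)

Section Tensors.
Variable K : fieldType.

Definition lin1 (U : lmodType K) (f : U -> K) :=
  forall (a : K) (u v : U), f (a *: u + v) = a * f u + f v.

Definition linmap (U V : lmodType K) (f : U -> V) :=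
  forall (a : K) (u v : U), f (a *: u + v) = a *: f u + f v.

Definition bilinmap (U V W : lmodType K) (f : U -> V -> W) :=
  (forall v, linmap (fun u => f u v)) /\ (forall u, linmap (f u)).

Definition bilin (U V : lmodType K) (f : U -> V -> K) :=
  (forall v, lin1 (fun u => f u v)) /\ (forall u, lin1 (f u)).

Definition trilin (U V W : lmodType K) (f : U -> V -> W -> K) :=
  [/\ forall v w, lin1 (fun u => f u v w),
      forall u w, lin1 (fun v => f u v w) &
      forall u v, lin1 (f u v)].

Definition quadlin (U V W X : lmodType K) (f : U -> V -> W -> X -> K) :=
  [/\ forall v w x, lin1 (fun u => f u v w x),
      forall u w x, lin1 (fun v => f u v w x),
      forall u v x, lin1 (fun w => f u v w x) &
      forall u v w, lin1 (f u v w)].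

Definition teq2 (U V : lmodType K) (s t : seq (U * V)) :=
  forall f : U -> V -> K, bilin f ->
    \sum_(p <- s) f p.1 p.2 = \sum_(p <- t) f p.1 p.2.

Definition teq3 (U V W : lmodType K) (s t : seq (U * V * W)) :=
  forall f : U -> V -> W -> K, trilin f ->
    \sum_(p <- s) f p.1.1 p.1.2 p.2 = \sum_(p <- t) f p.1.1 p.1.2 p.2.

Definition teq4 (U V W X : lmodType K) (s t : seq (U * V * W * X)) :=
  forall f : U -> V -> W -> X -> K, quadlin f ->
    \sum_(p <- s) f p.1.1.1 p.1.1.2 p.1.2 p.2 =
    \sum_(p <- t) f p.1.1.1 p.1.1.2 p.1.2 p.2.

Definition tscale2 (U V : lmodType K) (a : K) (s : seq (U * V)) :=
  [seq (a *: p.1, p.2) | p <- s].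
Definition tscale3 (U V W : lmodType K) (a : K) (s : seq (U * V * W)) :=
  [seq (a *: p.1.1, p.1.2, p.2) | p <- s].

Definition tlin2 (U V W : lmodType K) (D : U -> seq (V * W)) :=
  forall (a : K) (u v : U), teq2 (D (a *: u + v)) (tscale2 a (D u) ++ D v).

(* Hom-structures (no (co)units).                                           *)

Definition HomAssoc (A : lmodType K) (mu : A -> A -> A) (alpha : A -> A) :=
  [/\ linmap alpha, bilinmap mu,
      forall x y, alpha (mu x y) = mu (alpha x) (alpha y) &
      forall x y z, mu (alpha x) (mu y z) = mu (mu x y) (alpha z)].

Definition HomBialgebra (H : lmodType K) (mu : H -> H -> H)
    (Delta : H -> seq (H * H)) (alpha : H -> H) :=
  [/\ HomAssoc mu alpha, tlin2 Delta,
      forall h, teq3 [seq (q.1, q.2, alpha p.2) | p <- Delta h, q <- Delta p.1]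
                     [seq (alpha p.1, q.1, q.2) | p <- Delta h, q <- Delta p.2],
      forall h h', teq2 (Delta (mu h h'))
                        [seq (mu p.1 p'.1, mu p.2 p'.2) | p <- Delta h, p' <- Delta h'] &
      forall h, teq2 (Delta (alpha h)) [seq (alpha p.1, alpha p.2) | p <- Delta h]].

Definition ModHomAlg (H A : lmodType K) (muH : H -> H -> H)
    (DeltaH : H -> seq (H * H)) (alphaH : H -> H)
    (muA : A -> A -> A) (alphaA : A -> A) (act : H -> A -> A) :=
  [/\ HomAssoc muA alphaA, bilinmap act,
      forall h a, alphaA (act h a) = act (alphaH h) (alphaA a),
      forall h h' a, act (alphaH h) (act h' a) = act (muH h h') (alphaA a) &
      forall h a a', act (alphaH (alphaH h)) (muA a a') =
                     \sum_(q <- DeltaH h) muA (act q.1 a) (act q.2 a')].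

Definition LComod (H M : lmodType K) (DeltaH : H -> seq (H * H)) (alphaH : H -> H)
    (alphaM : M -> M) (lam : M -> seq (H * M)) :=
  [/\ tlin2 lam,
      forall m, teq2 [seq (alphaH p.1, alphaM p.2) | p <- lam m] (lam (alphaM m)) &
      forall m, teq3 [seq (q.1, q.2, alphaM p.2) | p <- lam m, q <- DeltaH p.1]
                     [seq (alphaH p.1, q.1, q.2) | p <- lam m, q <- lam p.2]].

Definition LComodHomAlg (H A : lmodType K) (muH : H -> H -> H)
    (DeltaH : H -> seq (H * H)) (alphaH : H -> H)
    (muA : A -> A -> A) (alphaA : A -> A) (lam : A -> seq (H * A)) :=
  [/\ HomAssoc muA alphaA, LComod DeltaH alphaH alphaA lam &
      forall a a', teq2 (lam (muA a a'))
                        [seq (muH p.1 p'.1, muA p.2 p'.2) | p <- lam a, p' <- lam a']].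

Definition YDcompat (H M : lmodType K) (muH : H -> H -> H)
    (DeltaH : H -> seq (H * H)) (alphaH : H -> H)
    (act : H -> M -> M) (lam : M -> seq (H * M)) :=
  forall h m,
    teq2 [seq (muH u.1 (alphaH (alphaH q.2)), u.2) | q <- DeltaH h, u <- lam (act q.1 m)]
         [seq (muH (alphaH (alphaH q.1)) (alphaH u.1), act (alphaH q.2) u.2)
            | q <- DeltaH h, u <- lam m].

Definition LLYD (H M : lmodType K) (muH : H -> H -> H)
    (DeltaH : H -> seq (H * H)) (alphaH : H -> H)
    (alphaM : M -> M) (act : H -> M -> M) (lam : M -> seq (H * M)) :=
  [/\ linmap alphaM, bilinmap act,
      forall h m, alphaM (act h m) = act (alphaH h) (alphaM m),
      forall h h' m, act (alphaH h) (act h' m) = act (muH h h') (alphaM m) &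
      LComod DeltaH alphaH alphaM lam /\
      YDcompat muH DeltaH alphaH act lam].

Section Smash.
Variables (H A : lmodType K) (muH : H -> H -> H) (DeltaH : H -> seq (H * H))
  (alphaH alphaHinv : H -> H) (muA : A -> A -> A) (alphaA alphaAinv : A -> A)
  (act : H -> A -> A) (lamA : A -> seq (H * A)).

Definition smash_alpha (s : seq (A * H)) : seq (A * H) :=
  [seq (alphaA p.1, alphaH p.2) | p <- s].

(* (a # h)(a' # h') = a (alpha_H^-2(h1) . alpha_A^-1(a')) # alpha_H^-1(h2) h' *)
Definition smash_mul (s t : seq (A * H)) : seq (A * H) :=
  [seq (muA pp.1.1 (act (alphaHinv (alphaHinv q.1)) (alphaAinv pp.2.1)),
        muH (alphaHinv q.2) pp.2.2)
     | pp <- [seq (p, p') | p <- s, p' <- t], q <- DeltaH pp.1.2].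

Definition smash_rho (s : seq (A * H)) : seq (A * H * H) :=
  [seq (alphaA p.1, q.1, q.2) | p <- s, q <- DeltaH p.2].

Definition smash_lam (s : seq (A * H)) : seq (H * A * H) :=
  [seq (muH pu.2.1 q.1, pu.2.2, q.2)
     | pu <- [seq (p, u) | p <- s, u <- lamA p.1], q <- DeltaH pu.1.2].

Definition smash_HomAssoc :=
  [/\ (forall s s', teq2 s s' -> teq2 (smash_alpha s) (smash_alpha s')),
      (forall (a : K) s s', teq2 (smash_alpha (tscale2 a s ++ s'))
                                 (tscale2 a (smash_alpha s) ++ smash_alpha s')),
      (forall s s' t, teq2 s s' ->
          teq2 (smash_mul s t) (smash_mul s' t) /\ teq2 (smash_mul t s) (smash_mul t s')),
      (forall (a : K) s s' t,
          teq2 (smash_mul (tscale2 a s ++ s') t)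
               (tscale2 a (smash_mul s t) ++ smash_mul s' t) /\
          teq2 (smash_mul t (tscale2 a s ++ s'))
               (tscale2 a (smash_mul t s) ++ smash_mul t s')) &
      (forall s t, teq2 (smash_alpha (smash_mul s t))
                        (smash_mul (smash_alpha s) (smash_alpha t))) /\
      (forall s t u, teq2 (smash_mul (smash_alpha s) (smash_mul t u))
                          (smash_mul (smash_mul s t) (smash_alpha u)))].

Definition smash_RComodHomAlg :=
  [/\
      (forall s s', teq2 s s' -> teq3 (smash_rho s) (smash_rho s')),
      (forall (a : K) s s', teq3 (smash_rho (tscale2 a s ++ s'))
                                 (tscale3 a (smash_rho s) ++ smash_rho s')),
      (forall s, teq3 [seq (alphaA p.1.1, alphaH p.1.2, alphaH p.2) | p <- smash_rho s]
                      (smash_rho (smash_alpha s))),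
      (forall s, teq4 [seq (alphaA p.1.1, alphaH p.1.2, q.1, q.2)
                         | p <- smash_rho s, q <- DeltaH p.2]
                      [seq (r.1.1, r.1.2, r.2, alphaH p.2)
                         | p <- smash_rho s, r <- smash_rho [:: (p.1.1, p.1.2)]]) &
      (forall s t, teq3 (smash_rho (smash_mul s t))
                        [seq (r.1, r.2, muH pp.1.2 pp.2.2)
                           | pp <- [seq (p, p') | p <- smash_rho s, p' <- smash_rho t],
                             r <- smash_mul [:: pp.1.1] [:: pp.2.1]])].

Definition smash_LComodHomAlg :=
  [/\ (forall s s', teq2 s s' -> teq3 (smash_lam s) (smash_lam s')),
      (forall (a : K) s s', teq3 (smash_lam (tscale2 a s ++ s'))
                                 (tscale3 a (smash_lam s) ++ smash_lam s')),
      (forall s, teq3 [seq (alphaH p.1.1, alphaA p.1.2, alphaH p.2) | p <- smash_lam s]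
                      (smash_lam (smash_alpha s))),
      (forall s, teq4 [seq (q.1, q.2, alphaA p.1.2, alphaH p.2)
                         | p <- smash_lam s, q <- DeltaH p.1.1]
                      [seq (alphaH p.1.1, r.1.1, r.1.2, r.2)
                         | p <- smash_lam s, r <- smash_lam [:: (p.1.2, p.2)]]) &
      (forall s t, teq3 (smash_lam (smash_mul s t))
                        [seq (muH pp.1.1.1 pp.2.1.1, r.1, r.2)
                           | pp <- [seq (p, p') | p <- smash_lam s, p' <- smash_lam t],
                             r <- smash_mul [:: (pp.1.1.2, pp.1.2)]
                                            [:: (pp.2.1.2, pp.2.2)]])].

Definition smash_bicomod_compat :=
  forall s, teq4 [seq (r.1.1, r.1.2, r.2, alphaH p.2)
                    | p <- smash_rho s, r <- smash_lam [:: (p.1.1, p.1.2)]]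
                 [seq (alphaH p.1.1, r.1.1, r.1.2, r.2)
                    | p <- smash_lam s, r <- smash_rho [:: (p.1.2, p.2)]].

Definition smash_BicomodHomAlg :=
  [/\ smash_HomAssoc, smash_RComodHomAlg, smash_LComodHomAlg & smash_bicomod_compat].

End Smash.
End Tensors.

(* Elements of a tensor product are represented by lists of pure tensors, identified
   when every multilinear form agrees on them.  Each hypothesis, read as an identity in a
   tensor power, thus becomes a rewrite rule for sums of a multilinear form, and each
   claim reduces to an equality of iterated sums of scalars, obtained by chaining such
   rewrites with exchanges of summations and cancellations of the invertible structure
   maps.  Hom-associativity of A # H comes from the module Hom-algebra axioms and the
   Hom-coassociativity of Delta_H; the right coaction is a comodule Hom-algebra structure
   commuting with the left one by the Hom-bialgebra axioms of H; the left coaction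
   inherits coassociativity from that of A, and its multiplicativity is where the
   Yetter-Drinfeld condition enters. *)

From mathcomp Require Import all_boot all_order all_algebra.
From Stdlib Require Import Setoid Morphisms.
Set Implicit Arguments. Unset Strict Implicit. Unset Printing Implicit Defensive.
Import GRing.Theory.
Local Open Scope ring_scope.

#[local] Instance bigop_pointwise_eq (R I : Type) (idx : R) (r : seq I) :
  Proper (pointwise_relation I eq ==> eq) (@bigop R I idx r).
Proof. by move=> F G eqFG; rewrite unlock /reducebig; elim: r => //= x r ->; rewrite eqFG. Qed.

Section Multilinear.
Variable K : fieldType.
Implicit Types U V W X Y : lmodType K.

Lemma lin1_0 U (f : U -> K) : lin1 f -> f 0 = 0.
Proof.
move=> f_lin; have := f_lin 1 0 0; rewrite scale1r addr0 mul1r => f00.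
by apply: (addIr (f 0)); rewrite add0r -f00.
Qed.

Lemma lin1Z U (f : U -> K) a u : lin1 f -> f (a *: u) = a * f u.
Proof. by move=> f_lin; have := f_lin a u 0; rewrite !addr0 (lin1_0 f_lin) addr0. Qed.

Lemma lin1D U (f : U -> K) u v : lin1 f -> f (u + v) = f u + f v.
Proof. by move=> f_lin; have := f_lin 1 u v; rewrite scale1r mul1r. Qed.

Lemma lin1_sum U (f : U -> K) I (r : seq I) (F : I -> U) :
  lin1 f -> f (\sum_(i <- r) F i) = \sum_(i <- r) f (F i).
Proof.
move=> f_lin; elim: r => [|x r IHr]; first by rewrite !big_nil (lin1_0 f_lin).
by rewrite !big_cons (lin1D _ _ f_lin) IHr.
Qed.

Lemma linmap0 U V (f : U -> V) : linmap f -> f 0 = 0.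
Proof.
move=> f_lin; have := f_lin 1 0 0; rewrite !scale1r addr0 => f00.
by apply: (addIr (f 0)); rewrite add0r -f00.
Qed.

Lemma linmapZ U V (f : U -> V) a u : linmap f -> f (a *: u) = a *: f u.
Proof. by move=> f_lin; have := f_lin a u 0; rewrite !addr0 (linmap0 f_lin) addr0. Qed.

Lemma linmapD U V (f : U -> V) u v : linmap f -> f (u + v) = f u + f v.
Proof. by move=> f_lin; have := f_lin 1 u v; rewrite !scale1r. Qed.

Lemma linmap_sum U V (f : U -> V) I (r : seq I) (F : I -> U) :
  linmap f -> f (\sum_(i <- r) F i) = \sum_(i <- r) f (F i).
Proof.
move=> f_lin; elim: r => [|x r IHr]; first by rewrite !big_nil (linmap0 f_lin).
by rewrite !big_cons (linmapD _ _ f_lin) IHr.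
Qed.

Lemma linmap_inv U (f g : U -> U) : linmap f -> cancel f g -> cancel g f -> linmap g.
Proof.
move=> f_lin fK gK a u v; rewrite -{1}(gK u) -{1}(gK v).
by rewrite -(linmapZ _ _ f_lin) -(linmapD _ _ f_lin) fK.
Qed.

Lemma bilin_suml U V (f : U -> V -> K) I (r : seq I) (F : I -> U) y :
  bilin f -> f (\sum_(i <- r) F i) y = \sum_(i <- r) f (F i) y.
Proof. by case=> fl _; rewrite (lin1_sum _ _ (fl y)). Qed.

Lemma bilinmap_sumr U V W (f : U -> V -> W) I (r : seq I) (F : I -> V) x :
  bilinmap f -> f x (\sum_(i <- r) F i) = \sum_(i <- r) f x (F i).
Proof. by case=> _ fr; rewrite (linmap_sum _ _ (fr x)). Qed.

Lemma lin1_addf U (f g : U -> K) : lin1 f -> lin1 g -> lin1 (fun x => f x + g x).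
Proof.
move=> f_lin g_lin a u v; rewrite f_lin g_lin mulrDr.
by rewrite -!addrA; congr (_ + _); rewrite addrCA.
Qed.

Lemma lin1_sumf U I (r : seq I) (F : I -> U -> K) :
  (forall i, lin1 (F i)) -> lin1 (fun x => \sum_(i <- r) F i x).
Proof.
move=> F_lin a u v; elim: r => [|i r IHr]; first by rewrite !big_nil mulr0 addr0.
rewrite !big_cons IHr F_lin mulrDr -!addrA; congr (_ + _).
by rewrite !addrA [_ + F i v]addrC.
Qed.

Lemma lin1_comp U V (g : V -> K) (M : U -> V) : lin1 g -> linmap M -> lin1 (fun x => g (M x)).
Proof. by move=> g_lin M_lin a u v; rewrite M_lin g_lin. Qed.

Lemma linmap_id U : linmap (fun x : U => x).
Proof. by []. Qed.

Lemma linmap_comp U V W (L : V -> W) (M : U -> V) :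
  linmap L -> linmap M -> linmap (fun x => L (M x)).
Proof. by move=> L_lin M_lin a u v; rewrite M_lin L_lin. Qed.

Lemma linmap_bilinl U V W X (m : V -> W -> X) (M : U -> V) b :
  bilinmap m -> linmap M -> linmap (fun x => m (M x) b).
Proof. by case=> ml _ M_lin a u v; rewrite M_lin ml. Qed.

Lemma linmap_bilinr U V W X (m : V -> W -> X) (M : U -> W) b :
  bilinmap m -> linmap M -> linmap (fun x => m b (M x)).
Proof. by case=> _ mr M_lin a u v; rewrite M_lin mr. Qed.

Lemma bilin_comp1 U V W (f : V -> W -> K) (M : U -> V) b :
  bilin f -> linmap M -> lin1 (fun x => f (M x) b).
Proof. by case=> fl _; apply: (lin1_comp (g := f^~ b)). Qed.

Lemma bilin_comp2 U V W (f : V -> W -> K) (M : U -> W) b :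
  bilin f -> linmap M -> lin1 (fun x => f b (M x)).
Proof. by case=> _ fr; apply: (lin1_comp (g := f b)). Qed.

Lemma trilin_comp1 U V W X (f : V -> W -> X -> K) (M : U -> V) b c :
  trilin f -> linmap M -> lin1 (fun x => f (M x) b c).
Proof. by case=> f1 _ _; apply: (lin1_comp (g := fun y => f y b c)). Qed.

Lemma trilin_comp2 U V W X (f : V -> W -> X -> K) (M : U -> W) b c :
  trilin f -> linmap M -> lin1 (fun x => f b (M x) c).
Proof. by case=> _ f2 _; apply: (lin1_comp (g := fun y => f b y c)). Qed.

Lemma trilin_comp3 U V W X (f : V -> W -> X -> K) (M : U -> X) b c :
  trilin f -> linmap M -> lin1 (fun x => f b c (M x)).
Proof. by case=> _ _ f3; apply: (lin1_comp (g := f b c)). Qed.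

Lemma quadlin_comp1 U V W X Y (f : V -> W -> X -> Y -> K) (M : U -> V) b c d :
  quadlin f -> linmap M -> lin1 (fun x => f (M x) b c d).
Proof. by case=> f1 _ _ _; apply: (lin1_comp (g := fun y => f y b c d)). Qed.

Lemma quadlin_comp2 U V W X Y (f : V -> W -> X -> Y -> K) (M : U -> W) b c d :
  quadlin f -> linmap M -> lin1 (fun x => f b (M x) c d).
Proof. by case=> _ f2 _ _; apply: (lin1_comp (g := fun y => f b y c d)). Qed.

Lemma quadlin_comp3 U V W X Y (f : V -> W -> X -> Y -> K) (M : U -> X) b c d :
  quadlin f -> linmap M -> lin1 (fun x => f b c (M x) d).
Proof. by case=> _ _ f3 _; apply: (lin1_comp (g := fun y => f b c y d)). Qed.

Lemma quadlin_comp4 U V W X Y (f : V -> W -> X -> Y -> K) (M : U -> Y) b c d :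
  quadlin f -> linmap M -> lin1 (fun x => f b c d (M x)).
Proof. by case=> _ _ _ f4; apply: (lin1_comp (g := f b c d)). Qed.

Lemma teq2_sum U V (s t : seq (U * V)) (G : U * V -> K) :
  teq2 s t -> bilin (fun x y => G (x, y)) -> \sum_(p <- s) G p = \sum_(p <- t) G p.
Proof.
have etaG (r : seq (U * V)) : \sum_(p <- r) G p = \sum_(p <- r) G (p.1, p.2).
  by apply: eq_bigr => -[].
by move=> eq_st G_bilin; rewrite !etaG (eq_st _ G_bilin).
Qed.

Lemma lin1_big_tlin2 U V W X (D : V -> seq (W * X)) (M : U -> V) (G : W * X -> K) :
  tlin2 D -> linmap M -> bilin (fun x y => G (x, y)) ->
  lin1 (fun u => \sum_(q <- D (M u)) G q).
Proof.
move=> D_lin M_lin G_bilin a u v; rewrite M_lin (teq2_sum (D_lin a (M u) (M v)) G_bilin).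
rewrite big_cat big_map big_distrr; congr (_ + _); apply: eq_bigr => -[x y] _ /=.
by rewrite (lin1Z _ _ (G_bilin.1 y)).
Qed.

Lemma big_tscale2 U V a (s : seq (U * V)) (G : U * V -> K) :
  bilin (fun x y => G (x, y)) -> \sum_(p <- tscale2 a s) G p = a * \sum_(p <- s) G p.
Proof.
case=> Gl _; rewrite big_map big_distrr; apply: eq_bigr => -[x y] _ /=.
exact: (lin1Z _ _ (Gl y)).
Qed.

Lemma big_tscale3 U V W a (s : seq (U * V * W)) (G : U * V * W -> K) :
  trilin (fun x y z => G (x, y, z)) -> \sum_(p <- tscale3 a s) G p = a * \sum_(p <- s) G p.
Proof.
case=> G1 _ _; rewrite big_map big_distrr; apply: eq_bigr => -[[x y] z] _ /=.
exact: (lin1Z _ _ (G1 y z)).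
Qed.

End Multilinear.

Ltac solve_linmap := first
  [ exact: linmap_id
  | match goal with f_bilin : bilinmap _ |- linmap _ =>
      first [ apply: (linmap_bilinl _ f_bilin); solve_linmap
            | apply: (linmap_bilinr _ f_bilin); solve_linmap ] end
  | match goal with f_lin : linmap _ |- linmap _ =>
      apply: (linmap_comp f_lin); solve_linmap end ].

Ltac solve_lin1 := first
  [ apply: lin1_addf; solve_lin1
  | apply: lin1_sumf => ?; solve_lin1
  | apply: lin1_big_tlin2; [eassumption | solve_linmap | split=> ? /=; solve_lin1]
  | match goal with
    | f_lin : bilin _ |- lin1 _ =>
        first [ apply: (bilin_comp1 _ f_lin); solve_linmap
              | apply: (bilin_comp2 _ f_lin); solve_linmap ]
    | f_lin : trilin _ |- lin1 _ =>
        first [ apply: (trilin_comp1 _ _ f_lin); solve_linmap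
              | apply: (trilin_comp2 _ _ f_lin); solve_linmap
              | apply: (trilin_comp3 _ _ f_lin); solve_linmap ]
    | f_lin : quadlin _ |- lin1 _ =>
        first [ apply: (quadlin_comp1 _ _ _ f_lin); solve_linmap
              | apply: (quadlin_comp2 _ _ _ f_lin); solve_linmap
              | apply: (quadlin_comp3 _ _ _ f_lin); solve_linmap
              | apply: (quadlin_comp4 _ _ _ f_lin); solve_linmap ]
    end ].

Ltac solve_multilin := repeat split; move=> * /=; solve_lin1.

Ltac expand_sums_lhs :=
  rewrite ?/smash_alpha ?/smash_mul ?/smash_rho ?/smash_lam
          ?(big_map, big_allpairs_dep, big_seq1, cats0) /=;
  try (under eq_bigr => ? _ do expand_sums_lhs).
Ltac expand_sums := expand_sums_lhs; symmetry; expand_sums_lhs; symmetry.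

(* Rewrites with [L] at the outermost depth of nested sums where it applies, and
   discharges the multilinearity side conditions. *)
Ltac rewrite_in_sums L :=
  first [ rewrite L; try (by solve_multilin) | under eq_bigr => ? _ do rewrite_in_sums L ].
Ltac rewrite_sums L :=
  first [ rewrite L; try (by solve_multilin) | under [LHS]eq_bigr => ? _ do rewrite_in_sums L ].
Ltac rewrite_sums_rhs L := symmetry; rewrite_sums L; symmetry.

Section SmashProduct.
Variables (K : fieldType) (H A : lmodType K)
  (muH : H -> H -> H) (D : H -> seq (H * H)) (aH aHi : H -> H)
  (muA : A -> A -> A) (aA aAi : A -> A)
  (act : H -> A -> A) (lam : A -> seq (H * A)).
Hypotheses (aH_lin : linmap aH) (muH_bilin : bilinmap muH)
  (aH_mul : forall x y, aH (muH x y) = muH (aH x) (aH y))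
  (muH_assoc : forall x y z, muH (aH x) (muH y z) = muH (muH x y) (aH z))
  (D_lin : tlin2 D)
  (D_coassoc : forall h, teq3 [seq (q.1, q.2, aH p.2) | p <- D h, q <- D p.1]
                              [seq (aH p.1, q.1, q.2) | p <- D h, q <- D p.2])
  (D_mul : forall h h', teq2 (D (muH h h'))
                          [seq (muH p.1 p'.1, muH p.2 p'.2) | p <- D h, p' <- D h'])
  (D_aH : forall h, teq2 (D (aH h)) [seq (aH p.1, aH p.2) | p <- D h])
  (aA_lin : linmap aA) (muA_bilin : bilinmap muA)
  (aA_mul : forall x y, aA (muA x y) = muA (aA x) (aA y))
  (muA_assoc : forall x y z, muA (aA x) (muA y z) = muA (muA x y) (aA z))
  (act_bilin : bilinmap act)
  (aA_act : forall h a, aA (act h a) = act (aH h) (aA a))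
  (act_act : forall h h' a, act (aH h) (act h' a) = act (muH h h') (aA a))
  (act_muA : forall h a a', act (aH (aH h)) (muA a a') =
                            \sum_(q <- D h) muA (act q.1 a) (act q.2 a'))
  (aHK : cancel aH aHi) (aKH : cancel aHi aH) (aAK : cancel aA aAi) (aKA : cancel aAi aA)
  (lam_lin : tlin2 lam)
  (lam_aA : forall m, teq2 [seq (aH p.1, aA p.2) | p <- lam m] (lam (aA m)))
  (lam_coassoc : forall m, teq3 [seq (q.1, q.2, aA p.2) | p <- lam m, q <- D p.1]
                                [seq (aH p.1, q.1, q.2) | p <- lam m, q <- lam p.2])
  (lam_mul : forall a a', teq2 (lam (muA a a'))
                            [seq (muH p.1 p'.1, muA p.2 p'.2) | p <- lam a, p' <- lam a'])
  (lam_YD : YDcompat muH D aH act lam).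

Ltac cancel_alpha := repeat first
  [ setoid_rewrite (aHK : forall x, aHi (aH x) = x)
  | setoid_rewrite (aKH : forall x, aH (aHi x) = x)
  | setoid_rewrite (aAK : forall x, aAi (aA x) = x)
  | setoid_rewrite (aKA : forall x, aA (aAi x) = x) ].

(* Stated as [Let]s so that the linearity tactics find them in the context. *)
Let aHi_lin : linmap aHi. Proof. exact: linmap_inv aH_lin aHK aKH. Qed.
Let aAi_lin : linmap aAi. Proof. exact: linmap_inv aA_lin aAK aKA. Qed.

Lemma aHi_mul x y : aHi (muH x y) = muH (aHi x) (aHi y).
Proof. by rewrite -{1}(aKH x) -{1}(aKH y) -aH_mul aHK. Qed.

Lemma aAi_mul x y : aAi (muA x y) = muA (aAi x) (aAi y).
Proof. by rewrite -{1}(aKA x) -{1}(aKA y) -aA_mul aAK. Qed.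

Lemma aAi_act h a : aAi (act h a) = act (aHi h) (aAi a).
Proof. by rewrite -{1}(aKH h) -{1}(aKA a) -aA_act aAK. Qed.

Lemma muH_assoc_aHi x y z : muH (muH x y) z = muH (aH x) (muH y (aHi z)).
Proof. by rewrite muH_assoc aKH. Qed.

Lemma muA_assoc_aAi x y z : muA (muA x y) z = muA (aA x) (muA y (aAi z)).
Proof. by rewrite muA_assoc aKA. Qed.

Lemma muH_mul_mul x y z w : muH (muH x y) (muH z w) = muH (aH x) (muH (aHi (muH y z)) w).
Proof.
rewrite muH_assoc_aHi aHi_mul; congr (muH _ _).
by rewrite -{1}(aKH y) muH_assoc aKH aHi_mul.
Qed.

Lemma act_actE x y m : act x (act y m) = act (muH (aHi x) y) (aA m).
Proof. by rewrite -act_act aKH. Qed.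

Lemma act_muAE h a a' :
  act h (muA a a') = \sum_(q <- D (aHi (aHi h))) muA (act q.1 a) (act q.2 a').
Proof. by rewrite -act_muA !aKH. Qed.

Lemma big_D_aH h (G : H * H -> K) : bilin (fun x y => G (x, y)) ->
  \sum_(q <- D (aH h)) G q = \sum_(q <- D h) G (aH q.1, aH q.2).
Proof. by move=> G_bilin; rewrite (teq2_sum (D_aH h)) // big_map. Qed.

Lemma big_D_aHi h (G : H * H -> K) : bilin (fun x y => G (x, y)) ->
  \sum_(q <- D (aHi h)) G q = \sum_(q <- D h) G (aHi q.1, aHi q.2).
Proof.
move=> G_bilin; rewrite -{2}(aKH h) big_D_aH /=; last by solve_multilin.
by apply: eq_bigr => -[x y] _ /=; rewrite !aHK.
Qed.

Lemma big_D_mul h h' (G : H * H -> K) : bilin (fun x y => G (x, y)) ->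
  \sum_(q <- D (muH h h')) G q =
  \sum_(p <- D h) \sum_(p' <- D h') G (muH p.1 p'.1, muH p.2 p'.2).
Proof. by move=> G_bilin; rewrite (teq2_sum (D_mul h h')) // big_allpairs_dep. Qed.

Lemma big_D_coassoc h (F : H -> H -> H -> K) : trilin F ->
  \sum_(p <- D h) \sum_(q <- D p.1) F q.1 q.2 (aH p.2) =
  \sum_(p <- D h) \sum_(q <- D p.2) F (aH p.1) q.1 q.2.
Proof. by move=> F_trilin; have := D_coassoc h F_trilin; rewrite !big_allpairs_dep. Qed.

Lemma big_D_coassoc_aHi_r h (F : H -> H -> H -> K) : trilin F ->
  \sum_(p <- D h) \sum_(q <- D p.1) F q.1 q.2 p.2 =
  \sum_(p <- D h) \sum_(q <- D p.2) F (aH p.1) q.1 (aHi q.2).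
Proof.
move=> F_trilin; have := big_D_coassoc h (F := fun x y z => F x y (aHi z)).
by cancel_alpha => ->; last by solve_multilin.
Qed.

Lemma big_D_coassoc_aHi_l h (F : H -> H -> H -> K) : trilin F ->
  \sum_(p <- D h) \sum_(q <- D p.2) F p.1 q.1 q.2 =
  \sum_(p <- D h) \sum_(q <- D p.1) F (aHi q.1) q.2 (aH p.2).
Proof.
move=> F_trilin; have := big_D_coassoc h (F := fun x y z => F (aHi x) y z).
by cancel_alpha => <-; last by solve_multilin.
Qed.

Lemma big_lam_aA m (G : H * A -> K) : bilin (fun x y => G (x, y)) ->
  \sum_(u <- lam (aA m)) G u = \sum_(u <- lam m) G (aH u.1, aA u.2).
Proof. by move=> G_bilin; rewrite -(teq2_sum (lam_aA m)) // big_map. Qed.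

Lemma big_lam_aAi m (G : H * A -> K) : bilin (fun x y => G (x, y)) ->
  \sum_(u <- lam (aAi m)) G u = \sum_(u <- lam m) G (aHi u.1, aAi u.2).
Proof.
move=> G_bilin; rewrite -{2}(aKA m) big_lam_aA /=; last by solve_multilin.
by apply: eq_bigr => -[x y] _ /=; rewrite aHK aAK.
Qed.

Lemma big_lam_mul a a' (G : H * A -> K) : bilin (fun x y => G (x, y)) ->
  \sum_(u <- lam (muA a a')) G u =
  \sum_(p <- lam a) \sum_(p' <- lam a') G (muH p.1 p'.1, muA p.2 p'.2).
Proof. by move=> G_bilin; rewrite (teq2_sum (lam_mul a a')) // big_allpairs_dep. Qed.

Lemma big_lam_coassoc m (F : H -> H -> A -> K) : trilin F ->
  \sum_(p <- lam m) \sum_(q <- D p.1) F q.1 q.2 (aA p.2) =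
  \sum_(p <- lam m) \sum_(q <- lam p.2) F (aH p.1) q.1 q.2.
Proof. by move=> F_trilin; have := lam_coassoc m F_trilin; rewrite !big_allpairs_dep. Qed.

(* The Yetter-Drinfeld condition, with [h] replaced by [aHi^3 h] to clear the powers of [aH]. *)
Lemma big_lam_YD h m (G : H * A -> K) : bilin (fun x y => G (x, y)) ->
  \sum_(w <- D h) \sum_(t <- lam (act (aHi (aHi (aHi w.1))) m)) G (muH t.1 (aHi w.2), t.2) =
  \sum_(w <- D h) \sum_(t <- lam m) G (muH (aHi w.1) (aH t.1), act (aHi (aHi w.2)) t.2).
Proof.
move=> G_bilin; have := lam_YD (aHi (aHi (aHi h))) m G_bilin; rewrite !big_allpairs_dep /=.
do 6! (rewrite big_D_aHi; last by solve_multilin).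
by cancel_alpha.
Qed.

Local Notation alpha := (smash_alpha aH aA).
Local Notation mul := (smash_mul muH D aHi muA aAi act).
Local Notation rho := (smash_rho D aA).
Local Notation lambda := (smash_lam muH D lam).

Lemma smash_alpha_teq s s' : teq2 s s' -> teq2 (alpha s) (alpha s').
Proof. by move=> eq_ss' f f_bilin; rewrite !big_map (teq2_sum eq_ss'); solve_multilin. Qed.

Lemma smash_alpha_linear a s s' :
  teq2 (alpha (tscale2 a s ++ s')) (tscale2 a (alpha s) ++ alpha s').
Proof.
move=> f f_bilin; rewrite /smash_alpha map_cat !big_cat big_tscale2; last by solve_multilin.
rewrite /tscale2 !big_map /= big_distrr; congr (_ + _); apply: eq_bigr => p _.
by rewrite (linmapZ _ _ aA_lin) (lin1Z _ _ (f_bilin.1 _)).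
Qed.

Lemma smash_mul_teq s s' t :
  teq2 s s' -> teq2 (mul s t) (mul s' t) /\ teq2 (mul t s) (mul t s').
Proof.
move=> eq_ss'; split=> f f_bilin; rewrite /smash_mul !big_allpairs_dep /=.
  by rewrite (teq2_sum eq_ss'); solve_multilin.
by apply: eq_bigr => p _; rewrite (teq2_sum eq_ss'); solve_multilin.
Qed.

Lemma smash_mul_linear a s s' t :
  teq2 (mul (tscale2 a s ++ s') t) (tscale2 a (mul s t) ++ mul s' t) /\
  teq2 (mul t (tscale2 a s ++ s')) (tscale2 a (mul t s) ++ mul t s').
Proof.
split=> f f_bilin; rewrite /smash_mul big_cat big_tscale2 ?big_allpairs_dep /=;
  try by solve_multilin.
  by rewrite big_cat big_tscale2 /=; solve_multilin.
rewrite big_distrr -big_split /=; apply: eq_bigr => p _.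
by rewrite big_cat big_tscale2 //; solve_multilin.
Qed.

Lemma smash_alpha_mul s t : teq2 (alpha (mul s t)) (mul (alpha s) (alpha t)).
Proof.
move=> f f_bilin; expand_sums; rewrite_sums_rhs big_D_aH => /=.
by setoid_rewrite aA_mul; setoid_rewrite aA_act; setoid_rewrite aH_mul; cancel_alpha.
Qed.

Lemma smash_mul_assoc s t u : teq2 (mul (alpha s) (mul t u)) (mul (mul s t) (alpha u)).
Proof.
move=> f f_bilin; expand_sums.
symmetry; under eq_bigr => p _ do under eq_bigr => p' _ do rewrite exchange_big.
symmetry.
apply: eq_bigr => -[a h] _; apply: eq_bigr => -[b g] _; apply: eq_bigr => -[c k] _ /=.
rewrite_sums big_D_aH; cancel_alpha.
setoid_rewrite aAi_mul; setoid_rewrite aAi_act.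
setoid_rewrite act_muAE; setoid_rewrite bilinmap_sumr; last exact: muA_bilin.
setoid_rewrite (bilin_suml _ _ _ f_bilin).
do 3! rewrite_sums big_D_aHi; simpl.
setoid_rewrite act_actE; cancel_alpha.
rewrite exchange_big; under eq_bigr => r _ do rewrite exchange_big.
rewrite (big_D_coassoc_aHi_r h (F := fun x y z => \sum_(z' <- D g)
  f (muA (aA a) (muA (act (aHi (aHi (aHi x))) (aAi b))
       (act (muH (aHi (aHi (aHi (aHi y)))) (aHi (aHi (aHi z'.1)))) (aAi c))))
    (muH z (muH (aHi z'.2) k)))); last by solve_multilin.
rewrite_sums_rhs big_D_mul; rewrite_sums_rhs big_D_aHi; simpl.
setoid_rewrite muA_assoc_aAi; setoid_rewrite aAi_act; setoid_rewrite aHi_mul.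
setoid_rewrite muH_assoc_aHi; cancel_alpha.
by repeat setoid_rewrite aHi_mul.
Qed.

Lemma smash_homassoc : smash_HomAssoc muH D aH aHi muA aA aAi act.
Proof.
split; [exact: smash_alpha_teq | exact: smash_alpha_linear | exact: smash_mul_teq
       | exact: smash_mul_linear | split; [exact: smash_alpha_mul | exact: smash_mul_assoc]].
Qed.


Lemma smash_rho_teq s s' : teq2 s s' -> teq3 (rho s) (rho s').
Proof. by move=> eq_ss' f f_trilin; expand_sums; rewrite (teq2_sum eq_ss'); solve_multilin. Qed.

Lemma smash_rho_linear a s s' : teq3 (rho (tscale2 a s ++ s')) (tscale3 a (rho s) ++ rho s').
Proof.
move=> f f_trilin; rewrite /smash_rho big_allpairs_dep big_cat big_tscale2 /=;
  last by solve_multilin.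
by rewrite big_cat big_tscale3 ?big_allpairs_dep //; solve_multilin.
Qed.

Lemma smash_rho_alpha s :
  teq3 [seq (aA p.1.1, aH p.1.2, aH p.2) | p <- rho s] (rho (alpha s)).
Proof. by move=> f f_trilin; expand_sums; rewrite_sums_rhs big_D_aH. Qed.

Lemma smash_rho_coassoc s :
  teq4 [seq (aA p.1.1, aH p.1.2, q.1, q.2) | p <- rho s, q <- D p.2]
       [seq (r.1.1, r.1.2, r.2, aH p.2) | p <- rho s, r <- rho [:: (p.1.1, p.1.2)]].
Proof.
move=> f f_quadlin; expand_sums.
by apply: eq_bigr => -[a h] _ /=; rewrite -big_D_coassoc //; solve_multilin.
Qed.

Lemma smash_rho_mul s t :
  teq3 (rho (mul s t))
       [seq (r.1, r.2, muH pp.1.2 pp.2.2)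
          | pp <- [seq (p, p') | p <- rho s, p' <- rho t], r <- mul [:: pp.1.1] [:: pp.2.1]].
Proof.
move=> f f_trilin; expand_sums.
symmetry; under eq_bigr => p _ do rewrite exchange_big; symmetry.
apply: eq_bigr => -[a h] _; apply: eq_bigr => -[b g] _ /=.
rewrite_sums big_D_mul; rewrite_sums big_D_aHi; simpl.
setoid_rewrite aA_mul; setoid_rewrite aA_act; cancel_alpha.
symmetry; under eq_bigr => k _ do rewrite exchange_big.
rewrite (big_D_coassoc_aHi_r h (F := fun x y z => \sum_(k' <- D g)
  f (muA (aA a) (act (aHi (aHi x)) b)) (muH (aHi y) k'.1) (muH z k'.2)));
  last by solve_multilin.
by cancel_alpha.
Qed.

Lemma smash_rcomod_hom_alg : smash_RComodHomAlg muH D aH aHi muA aA aAi act.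
Proof.
split; [exact: smash_rho_teq | exact: smash_rho_linear | exact: smash_rho_alpha
       | exact: smash_rho_coassoc | exact: smash_rho_mul].
Qed.

Lemma smash_lam_teq s s' : teq2 s s' -> teq3 (lambda s) (lambda s').
Proof. by move=> eq_ss' f f_trilin; expand_sums; rewrite (teq2_sum eq_ss'); solve_multilin. Qed.

Lemma smash_lam_linear a s s' :
  teq3 (lambda (tscale2 a s ++ s')) (tscale3 a (lambda s) ++ lambda s').
Proof.
move=> f f_trilin; rewrite /smash_lam !big_allpairs_dep big_cat big_tscale2 /=;
  last by solve_multilin.
by rewrite big_cat big_tscale3 ?big_allpairs_dep //; solve_multilin.
Qed.

Lemma smash_lam_alpha s :
  teq3 [seq (aH p.1.1, aA p.1.2, aH p.2) | p <- lambda s] (lambda (alpha s)).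
Proof.
move=> f f_trilin; expand_sums; rewrite_sums_rhs big_lam_aA; rewrite_sums_rhs big_D_aH.
by setoid_rewrite aH_mul.
Qed.

Lemma smash_lam_coassoc s :
  teq4 [seq (q.1, q.2, aA p.1.2, aH p.2) | p <- lambda s, q <- D p.1.1]
       [seq (aH p.1.1, r.1.1, r.1.2, r.2) | p <- lambda s, r <- lambda [:: (p.1.2, p.2)]].
Proof.
move=> f f_quadlin; expand_sums; apply: eq_bigr => -[a h] _ /=.
rewrite_sums big_D_mul; simpl.
under eq_bigr => u _ do rewrite exchange_big.
rewrite (big_lam_coassoc a (F := fun x y z => \sum_(k <- D h) \sum_(w <- D k.1)
  f (muH x w.1) (muH y w.2) z (aH k.2))); last by solve_multilin.
setoid_rewrite aH_mul.
symmetry; rewrite exchange_big.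
under eq_bigr => k _ do under eq_bigr => u _ do rewrite exchange_big.
under eq_bigr => k _ do rewrite exchange_big.
rewrite -(big_D_coassoc h (F := fun x y z => \sum_(u <- lam a) \sum_(u' <- lam u.2)
  f (muH (aH u.1) x) (muH u'.1 y) u'.2 z)); last by solve_multilin.
under eq_bigr => k _ do rewrite exchange_big.
rewrite exchange_big.
under eq_bigr => u _ do under eq_bigr => k _ do rewrite exchange_big.
by under eq_bigr => u _ do rewrite exchange_big.
Qed.

(* Multiplicativity of the left coaction: the Yetter-Drinfeld condition lets the
   coproduct of h pass the coaction of the action of its left leg on a'. *)
Lemma smash_lam_mul s t :
  teq3 (lambda (mul s t))
       [seq (muH pp.1.1.1 pp.2.1.1, r.1, r.2)
          | pp <- [seq (p, p') | p <- lambda s, p' <- lambda t],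
            r <- mul [:: (pp.1.1.2, pp.1.2)] [:: (pp.2.1.2, pp.2.2)]].
Proof.
move=> f f_trilin; expand_sums.
symmetry.
under eq_bigr => p _ do (under eq_bigr => u _ do rewrite exchange_big; rewrite exchange_big).
symmetry.
apply: eq_bigr => -[a h] _; apply: eq_bigr => -[b g] _ /=.
rewrite_sums big_lam_mul; rewrite_sums big_D_mul; rewrite_sums big_D_aHi; simpl.
under eq_bigr => q _ do (under eq_bigr => u _ do rewrite exchange_big; rewrite exchange_big).
rewrite (big_D_coassoc_aHi_l h (F := fun x y z => \sum_(u <- lam a)
  \sum_(t <- lam (act (aHi (aHi x)) (aAi b))) \sum_(z' <- D g)
  f (muH (muH u.1 t.1) (muH (aHi y) z'.1)) (muA u.2 t.2) (muH (aHi z) z'.2)));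
  last by solve_multilin.
cancel_alpha; setoid_rewrite muH_mul_mul.
under [LHS]eq_bigr => q _ do rewrite exchange_big.
under [LHS]eq_bigr => q _ do under eq_bigr => u _ do
  (rewrite (big_lam_YD q.1 (aAi b) (G := fun p => \sum_(z' <- D g)
     f (muH (aH u.1) (muH (aHi p.1) z'.1)) (muA u.2 p.2) (muH q.2 z'.2))); last by solve_multilin).
rewrite_sums big_lam_aAi; simpl; cancel_alpha; repeat setoid_rewrite aHi_mul.
under [LHS]eq_bigr => q _ do rewrite exchange_big.
rewrite (big_D_coassoc_aHi_r h (F := fun x y z => \sum_(u <- lam a) \sum_(t <- lam b)
  \sum_(z' <- D g) f (muH (aH u.1) (muH (muH (aHi (aHi x)) (aHi t.1)) z'.1))
                     (muA u.2 (act (aHi (aHi y)) (aAi t.2))) (muH z z'.2)));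
  last by solve_multilin.
cancel_alpha; symmetry.
under [LHS]eq_bigr => u _ do under eq_bigr => k _ do under eq_bigr => u' _ do rewrite exchange_big.
under [LHS]eq_bigr => u _ do under eq_bigr => k _ do rewrite exchange_big.
rewrite exchange_big.
by under [LHS]eq_bigr => k _ do rewrite exchange_big.
Qed.

Lemma smash_lcomod_hom_alg : smash_LComodHomAlg muH D aH aHi muA aA aAi act lam.
Proof.
split; [exact: smash_lam_teq | exact: smash_lam_linear | exact: smash_lam_alpha
       | exact: smash_lam_coassoc | exact: smash_lam_mul].
Qed.

Lemma smash_coactions_commute : smash_bicomod_compat muH D aH aA lam.
Proof.
move=> s f f_quadlin; expand_sums; apply: eq_bigr => -[a h] _ /=.
rewrite_sums big_lam_aA; simpl.
under eq_bigr => k _ do rewrite exchange_big.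
rewrite (big_D_coassoc h (F := fun x y z => \sum_(u <- lam a)
  f (muH (aH u.1) x) (aA u.2) y z)); last by solve_multilin.
setoid_rewrite aH_mul.
symmetry; rewrite exchange_big.
by under eq_bigr => k _ do rewrite exchange_big.
Qed.

Lemma smash_bicomod_hom_alg : smash_BicomodHomAlg muH D aH aHi muA aA aAi act lam.
Proof.
split; [exact: smash_homassoc | exact: smash_rcomod_hom_alg
       | exact: smash_lcomod_hom_alg | exact: smash_coactions_commute].
Qed.

End SmashProduct.

Theorem proposition3p9 (K : fieldType) (H A : lmodType K)
  (muH : H -> H -> H) (DeltaH : H -> seq (H * H)) (alphaH alphaHinv : H -> H)
  (muA : A -> A -> A) (alphaA alphaAinv : A -> A)
  (act : H -> A -> A) (lamA : A -> seq (H * A)) :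
  HomBialgebra muH DeltaH alphaH ->
  ModHomAlg muH DeltaH alphaH muA alphaA act ->
  cancel alphaH alphaHinv -> cancel alphaHinv alphaH ->
  cancel alphaA alphaAinv -> cancel alphaAinv alphaA ->
  LComodHomAlg muH DeltaH alphaH muA alphaA lamA ->
  LLYD muH DeltaH alphaH alphaA act lamA ->
  smash_BicomodHomAlg muH DeltaH alphaH alphaHinv muA alphaA alphaAinv act lamA.
Proof.
move=> [[aH_lin muH_bilin aH_mul muH_assoc] D_lin D_coassoc D_mul D_aH].
move=> [[aA_lin muA_bilin aA_mul muA_assoc] act_bilin aA_act act_act act_muA].
move=> aHK aKH aAK aKA [_ [lam_lin lam_aA lam_coassoc] lam_mul] [_ _ _ _ [_ lam_YD]].
exact: smash_bicomod_hom_alg.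
Qed.
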